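(* Let $f_1,f_2$ be strongly hyperbolic functions, $a_1,a_2>0$, $b_1,b_2,c_1,c_2\in\mathbb{R}$ with $(a_1,b_1,c_1)\neq(a_2,b_2,c_2)$, and let $D_1=\overline{f_{a_1,b_1,c_1}}$, $D_2=\overline{f_{a_2,b_2,c_2}}$. If one of the following holds, then $D_1\cap D_2=\{p\}$: (1) $p=(b,\infty)$, $a_1=a_2$, $b_1=b_2=-b$ and $c_1\neq c_2$; (2) $p=(\infty,c)$, $a_1=a_2$, $b_1\neq b_2$ and $c_1=c_2=c$; (3) $p=(x_p,y_p)\in\mathbb{R}^2$, $f_{a_1,b_1,c_1}(x_p)=f_{a_2,b_2,c_2}(x_p)=y_p$ and $f'_{a_1,b_1,c_1}(x_p)=f'_{a_2,b_2,c_2}(x_p)$.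
   Context: Identify $\mathbb{S}^1$ with $\mathbb{R}\cup\{\infty\}$, $\mathcal{P}=\mathbb{S}^1\times\mathbb{S}^1$, $\mathbb{R}^+=(0,\infty)$. A function $f:\mathbb{R}^+\to\mathbb{R}^+$ is strongly hyperbolic if: (1) $\lim_{x\to0+}f(x)=+\infty$, $\lim_{x\to+\infty}f(x)=0$; (2) $f$ strictly convex; (3) $\lim_{x\to+\infty}f(x+b)/f(x)=1$ for each $b\in\mathbb{R}$; (4) $f$ differentiable; (5) $\ln|f'|$ strictly convex. For $a>0$, $b,c\in\mathbb{R}$: $f_{a,b,c}:\mathbb{R}\setminus\{-b\}\to\mathbb{R}$, $f_{a,b,c}(x)=af_1(x+b)+c$ for $x>-b$, $f_{a,b,c}(x)=-af_2(-x-b)+c$ for $x<-b$; $\overline{f_{a,b,c}}=\{(x,f_{a,b,c}(x)):x\ne-b\}\cup\{(-b,\infty),(\infty,c)\}\subset\mathcal{P}$. *)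

From Stdlib Require Import Reals Lra.
From Coquelicot Require Import Coquelicot.
Open Scope R_scope.

(* S^1 = R ∪ {∞}: None is ∞. *)
Definition S1 : Type := option R.
Definition Pt : Type := (S1 * S1)%type.

Definition strictly_convex_pos (g : R -> R) : Prop :=
  forall x y t, 0 < x -> 0 < y -> x <> y -> 0 < t < 1 ->
    g (t * x + (1 - t) * y) < t * g x + (1 - t) * g y.

(* f : R^+ -> R^+ strongly hyperbolic (only values on (0,+oo) matter). *)
Definition strongly_hyperbolic (f : R -> R) : Prop :=
  (forall x, 0 < x -> 0 < f x) /\
  filterlim f (at_right 0) (Rbar_locally p_infty) /\
  filterlim f (Rbar_locally p_infty) (locally 0) /\
  strictly_convex_pos f /\
  (forall b : R, filterlim (fun x => f (x + b) / f x) (Rbar_locally p_infty) (locally 1)) /\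
  (forall x, 0 < x -> ex_derive f x) /\
  strictly_convex_pos (fun x => ln (Rabs (Derive f x))).

(* f_{a,b,c} built from f1, f2 (its value at -b is irrelevant). *)
Definition fabc (f1 f2 : R -> R) (a b c : R) (x : R) : R :=
  if Rlt_dec (- b) x then a * f1 (x + b) + c
  else - a * f2 (- x - b) + c.

(* closure of the graph of f_{a,b,c} in P = S^1 × S^1 *)
Definition Dbar (f1 f2 : R -> R) (a b c : R) (q : Pt) : Prop :=
  (exists x, x <> - b /\ q = (Some x, Some (fabc f1 f2 a b c x))) \/
  q = (Some (- b), None) \/ q = (None, Some c).

From Stdlib Require Import Reals Lra Psatz.
From Coquelicot Require Import Coquelicot.
Open Scope R_scope.

(* Right of its pole a graph is a convex decreasing branch lying above its horizontal
   asymptote, left of it a concave branch lying below it.  In cases (1) and (2) the two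
   graphs differ by a vertical, resp. horizontal, shift of such branches, so away from
   the poles they never meet.  In case (3) take b2 < b1.  If xp lies between the poles, a
   convex and a concave branch share their tangent line at xp, which separates them.  If
   xp lies right of both poles, the derivative of y |-> a1 f1 (y + b1 - b2) - a2 f1 y
   changes sign only at the tangency, by the strict log-convexity of |f1'|; so this
   difference has a strict maximum there, equal to c2 - c1 > 0 since it decreases to a
   nonnegative limit at infinity.  Left of both poles is the mirror image under
   (x, y) |-> (-x, -y), which exchanges f1 and f2.  The remaining branches are compared
   by positivity and monotonicity. *)

Lemma is_derive_le_of_chord_bound (g : R -> R) (l C : R) :
  is_derive g 0 l -> (forall t, 0 < t < 1 -> g t - g 0 <= t * C) -> l <= C.
Proof.
  intros Hd Hbound. apply Rnot_lt_le. intros HCl.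
  apply is_derive_Reals in Hd.
  destruct (Hd (l - C) ltac:(lra)) as [delta Hdelta].
  pose proof (cond_pos delta) as Hdelta_pos.
  set (t := Rmin (1 / 2) (delta / 2)).
  assert (Ht : 0 < t <= 1 / 2) by (unfold t; split; [apply Rmin_pos|apply Rmin_l]; lra).
  assert (Ht_delta : t <= delta / 2) by apply Rmin_r.
  specialize (Hdelta t ltac:(lra) ltac:(rewrite Rabs_right; lra)).
  specialize (Hbound t ltac:(lra)).
  rewrite Rplus_0_l in Hdelta. apply Rabs_def2 in Hdelta as [_ Hlow].
  assert (Hquot : C < (g t - g 0) / t) by lra.
  apply (Rmult_lt_compat_r t) in Hquot; [|lra].
  unfold Rdiv in Hquot. rewrite Rmult_assoc, Rinv_l in Hquot by lra. lra.
Qed.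

Section StrictConvexity.

Variable f : R -> R.
Hypothesis f_convex : strictly_convex_pos f.

Lemma strictly_convex_chord_lt (p q r : R) : 0 < p -> p < q -> q < r ->
  (r - p) * f q < (r - q) * f p + (q - p) * f r.
Proof.
  intros Hp Hpq Hqr.
  set (t := (r - q) / (r - p)).
  assert (Ht : 0 < t < 1).
  { unfold t; split; [apply Rdiv_lt_0_compat; lra|].
    apply Rmult_lt_reg_r with (r - p); [lra|].
    unfold Rdiv; rewrite Rmult_assoc, Rinv_l; lra. }
  assert (Hq : t * p + (1 - t) * r = q) by (unfold t; field; lra).
  pose proof (f_convex p r t Hp ltac:(lra) ltac:(lra) Ht) as Hconv.
  rewrite Hq in Hconv.
  apply (Rmult_lt_compat_l (r - p)) in Hconv; [|lra].
  replace ((r - p) * (t * f p + (1 - t) * f r))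
    with ((r - q) * f p + (q - p) * f r) in Hconv by (unfold t; field; lra).
  exact Hconv.
Qed.

Lemma strictly_convex_shift_lt (y z d : R) : 0 < y -> y < z -> 0 < d ->
  f (y + d) - f y < f (z + d) - f z.
Proof.
  intros Hy Hyz Hd.
  pose proof (strictly_convex_chord_lt y (y + d) (z + d) Hy ltac:(lra) ltac:(lra)).
  pose proof (strictly_convex_chord_lt y z (z + d) Hy ltac:(lra) ltac:(lra)).
  apply Rmult_lt_reg_r with (z + d - y); [lra|]. nra.
Qed.

Lemma strictly_convex_tangent_lt (u w : R) : 0 < u -> 0 < w -> u <> w -> ex_derive f u ->
  f u + Derive f u * (w - u) < f w.
Proof.
  intros Hu Hw Huw Hder.
  assert (Hweak : forall z, 0 < z -> Derive f u * (z - u) <= f z - f u).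
  { intros z Hz.
    apply (is_derive_le_of_chord_bound (fun t => f (u + t * (z - u)))).
    - replace (Derive f u * (z - u)) with (scal (z - u) (Derive f u)) by apply Rmult_comm.
      apply (is_derive_comp f (fun t => u + t * (z - u))).
      + rewrite Rmult_0_l, Rplus_0_r. apply Derive_correct, Hder.
      + auto_derive; [exact I|ring].
    - intros t Ht. rewrite Rmult_0_l, Rplus_0_r.
      destruct (Req_dec z u) as [->|Hzu]; [rewrite Rminus_diag, Rmult_0_r, Rplus_0_r; lra|].
      pose proof (f_convex z u t Hz Hu Hzu Ht) as Hconv.
      replace (t * z + (1 - t) * u) with (u + t * (z - u)) in Hconv by ring. lra. }
  set (m := (u + w) / 2).
  pose proof (Hweak m ltac:(unfold m; lra)) as Htan_m.
  pose proof (f_convex u w (1 / 2) Hu Hw Huw ltac:(lra)) as Hmid.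
  replace (1 / 2 * u + (1 - 1 / 2) * w) with m in Hmid by (unfold m; field).
  replace (w - u) with (2 * (m - u)) by (unfold m; field). lra.
Qed.

End StrictConvexity.

Lemma ln_strictly_convex_shift_ratio_lt (g : R -> R) (y z d : R) :
  (forall x, 0 < x -> 0 < g x) -> strictly_convex_pos (fun x => ln (g x)) ->
  0 < y -> y < z -> 0 < d -> g (y + d) * g z < g (z + d) * g y.
Proof.
  intros Hpos Hconv Hy Hyz Hd.
  pose proof (strictly_convex_shift_lt _ Hconv y z d Hy Hyz Hd) as Hshift; simpl in Hshift.
  pose proof (Hpos y Hy). pose proof (Hpos z ltac:(lra)).
  pose proof (Hpos (y + d) ltac:(lra)). pose proof (Hpos (z + d) ltac:(lra)).
  apply ln_lt_inv; [nra|nra|].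
  rewrite !ln_mult by lra. lra.
Qed.

Lemma is_derive_pos_lt (phi dphi : R -> R) (y z : R) : y < z ->
  (forall x, y <= x <= z -> is_derive phi x (dphi x)) ->
  (forall x, y < x < z -> 0 < dphi x) -> phi y < phi z.
Proof.
  intros Hyz Hder Hsign.
  destruct (MVT_cor2 phi dphi y z Hyz) as [c [Hmvt Hc]].
  - intros c Hc. apply is_derive_Reals, Hder, Hc.
  - pose proof (Hsign c Hc). nra.
Qed.

Lemma is_derive_neg_lt (phi dphi : R -> R) (y z : R) : y < z ->
  (forall x, y <= x <= z -> is_derive phi x (dphi x)) ->
  (forall x, y < x < z -> dphi x < 0) -> phi z < phi y.
Proof.
  intros Hyz Hder Hsign.
  destruct (MVT_cor2 phi dphi y z Hyz) as [c [Hmvt Hc]].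
  - intros c Hc. apply is_derive_Reals, Hder, Hc.
  - pose proof (Hsign c Hc). nra.
Qed.

Section StronglyHyperbolic.

Variable f : R -> R.
Hypothesis f_sh : strongly_hyperbolic f.

Lemma sh_pos (x : R) : 0 < x -> 0 < f x.
Proof. apply f_sh. Qed.

Lemma sh_ex_derive (x : R) : 0 < x -> ex_derive f x.
Proof. apply f_sh. Qed.

Lemma sh_small_at_infty (eps : R) : 0 < eps -> exists M, forall y, M < y -> f y < eps.
Proof.
  intros Heps.
  destruct f_sh as (_ & _ & Hlim & _).
  apply (is_lim_spec f p_infty 0) in Hlim.
  destruct (Hlim (mkposreal eps Heps)) as [M HM].
  exists M. intros y Hy. specialize (HM y Hy); simpl in HM.
  apply Rabs_def2 in HM. lra.
Qed.

Lemma sh_tangent_lt (u w : R) : 0 < u -> 0 < w -> u <> w ->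
  f u + Derive f u * (w - u) < f w.
Proof.
  intros Hu Hw Huw.
  apply strictly_convex_tangent_lt; [apply f_sh|assumption..|apply sh_ex_derive, Hu].
Qed.

Lemma sh_Derive_neg (u : R) : 0 < u -> Derive f u < 0.
Proof.
  intros Hu. apply Rnot_le_lt. intros Hder.
  destruct (sh_small_at_infty (f u) (sh_pos u Hu)) as [M HM].
  set (w := Rmax M u + 1).
  assert (Hw : u < w /\ M < w) by (unfold w; pose proof (Rmax_l M u); pose proof (Rmax_r M u); lra).
  pose proof (sh_tangent_lt u w Hu ltac:(lra) ltac:(lra)).
  pose proof (HM w ltac:(lra)). nra.
Qed.

Lemma sh_decreasing (u w : R) : 0 < u -> u < w -> f w < f u.
Proof.
  intros Hu Huw.
  pose proof (sh_tangent_lt w u ltac:(lra) Hu ltac:(lra)).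
  pose proof (sh_Derive_neg w ltac:(lra)). nra.
Qed.

Lemma sh_Derive_increasing (u w : R) : 0 < u -> u < w -> Derive f u < Derive f w.
Proof.
  intros Hu Huw.
  pose proof (sh_tangent_lt w u ltac:(lra) Hu ltac:(lra)).
  pose proof (sh_tangent_lt u w Hu ltac:(lra) ltac:(lra)). nra.
Qed.

Lemma sh_Derive_shift_ratio_lt (y z d : R) : 0 < y -> y < z -> 0 < d ->
  Derive f (y + d) * Derive f z < Derive f (z + d) * Derive f y.
Proof.
  intros Hy Hyz Hd.
  assert (Habs : forall x, 0 < x -> Rabs (Derive f x) = - Derive f x)
    by (intros x Hx; apply Rabs_left, sh_Derive_neg, Hx).
  pose proof (ln_strictly_convex_shift_ratio_lt (fun x => Rabs (Derive f x)) y z d) as Hratio.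
  simpl in Hratio. rewrite !Habs in Hratio by lra.
  enough (- Derive f (y + d) * - Derive f z < - Derive f (z + d) * - Derive f y) by lra.
  apply Hratio; [|apply f_sh|assumption..].
  intros x Hx. rewrite Habs by exact Hx. pose proof (sh_Derive_neg x Hx). lra.
Qed.

End StronglyHyperbolic.

Definition shift_diff (f : R -> R) (a1 a2 d y : R) : R := a1 * f (y + d) - a2 * f y.

Section ShiftDiff.

Variables (f : R -> R) (a1 a2 d v : R).
Hypotheses (f_sh : strongly_hyperbolic f) (a1_pos : 0 < a1) (a2_pos : 0 < a2)
  (d_pos : 0 < d) (v_pos : 0 < v).
Hypothesis Derive_match : a1 * Derive f (v + d) = a2 * Derive f v.

Local Notation phi := (shift_diff f a1 a2 d).
Local Notation dphi := (fun y => a1 * Derive f (y + d) - a2 * Derive f y).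

Lemma is_derive_shift_diff (y : R) : 0 < y -> is_derive phi y (dphi y).
Proof.
  intros Hy. unfold shift_diff. auto_derive.
  - split; [apply sh_ex_derive; [exact f_sh|lra]|].
    split; [apply sh_ex_derive; [exact f_sh|lra]|exact I].
  - rewrite !Rmult_1_l. reflexivity.
Qed.

Lemma Derive_shift_diff_sign (y : R) : 0 < y ->
  (v < y -> dphi y < 0) /\ (y < v -> 0 < dphi y).
Proof.
  intros Hy.
  pose proof (sh_Derive_neg f f_sh v v_pos).
  pose proof (sh_Derive_neg f f_sh y Hy).
  split; intros Hvy.
  - pose proof (sh_Derive_shift_ratio_lt f f_sh v y d v_pos Hvy d_pos). nra.
  - pose proof (sh_Derive_shift_ratio_lt f f_sh y v d Hy Hvy d_pos). nra.
Qed.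

Lemma shift_diff_decreasing (y z : R) : v <= y -> y < z -> phi z < phi y.
Proof.
  intros Hy Hyz.
  apply (is_derive_neg_lt phi dphi y z Hyz).
  - intros x Hx. apply is_derive_shift_diff. lra.
  - intros x Hx. apply Derive_shift_diff_sign; lra.
Qed.

Lemma shift_diff_increasing (y z : R) : 0 < y -> y < z -> z <= v -> phi y < phi z.
Proof.
  intros Hy Hyz Hz.
  apply (is_derive_pos_lt phi dphi y z Hyz).
  - intros x Hx. apply is_derive_shift_diff. lra.
  - intros x Hx. apply Derive_shift_diff_sign; lra.
Qed.

Lemma shift_diff_strict_max (y : R) : 0 < y -> y <> v -> phi y < phi v.
Proof.
  intros Hy Hyv. destruct (Rlt_or_le y v).
  - apply shift_diff_increasing; lra.
  - apply shift_diff_decreasing; lra.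
Qed.

Lemma shift_diff_max_pos : 0 < phi v.
Proof.
  apply Rnot_le_lt. intros Hmax.
  pose proof (shift_diff_decreasing v (v + 1) ltac:(lra) ltac:(lra)) as Hv1.
  destruct (sh_small_at_infty f f_sh (- phi (v + 1) / a2)) as [M HM].
  { apply Rdiv_lt_0_compat; lra. }
  set (y := Rmax M (v + 1) + 1).
  assert (Hy : v + 1 < y /\ M < y)
    by (unfold y; pose proof (Rmax_l M (v + 1)); pose proof (Rmax_r M (v + 1)); lra).
  pose proof (shift_diff_decreasing (v + 1) y ltac:(lra) ltac:(lra)).
  pose proof (sh_pos f f_sh (y + d) ltac:(lra)).
  specialize (HM y ltac:(lra)).
  apply (Rmult_lt_compat_l a2) in HM; [|lra].
  replace (a2 * (- phi (v + 1) / a2)) with (- phi (v + 1)) in HM by (field; lra).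
  unfold shift_diff at 1 in H. nra.
Qed.

Lemma shift_coef_lt : a2 < a1.
Proof.
  pose proof (sh_Derive_increasing f f_sh v (v + d) v_pos ltac:(lra)).
  pose proof (sh_Derive_neg f f_sh (v + d) ltac:(lra)). nra.
Qed.

End ShiftDiff.

Lemma fabc_right (f1 f2 : R -> R) (a b c x : R) : - b < x ->
  fabc f1 f2 a b c x = a * f1 (x + b) + c.
Proof. intros Hx. unfold fabc. destruct (Rlt_dec (- b) x); [reflexivity|contradiction]. Qed.

Lemma fabc_left (f1 f2 : R -> R) (a b c x : R) : x < - b ->
  fabc f1 f2 a b c x = - a * f2 (- x - b) + c.
Proof. intros Hx. unfold fabc. destruct (Rlt_dec (- b) x); [lra|reflexivity]. Qed.

Lemma fabc_mirror (f1 f2 : R -> R) (a b c x : R) : x <> - b ->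
  fabc f1 f2 a b c x = - fabc f2 f1 a (- b) (- c) (- x).
Proof.
  intros Hx. destruct (Rlt_or_le (- b) x) as [Hr|Hl].
  - rewrite fabc_right, fabc_left by lra.
    replace (- - x - - b) with (x + b) by ring. ring.
  - rewrite fabc_left, fabc_right by lra.
    replace (- x + - b) with (- x - b) by ring. ring.
Qed.

Lemma Derive_fabc_right (f1 f2 : R -> R) (a b c x : R) :
  strongly_hyperbolic f1 -> - b < x ->
  Derive (fabc f1 f2 a b c) x = a * Derive f1 (x + b).
Proof.
  intros Hf1 Hx.
  rewrite (Derive_ext_loc _ (fun y => a * f1 (y + b) + c)).
  - apply is_derive_unique. auto_derive.
    + apply sh_ex_derive; [exact Hf1|lra].
    + rewrite Rmult_1_l. reflexivity.
  - apply filter_imp with (fun y => - b < y); [apply fabc_right|].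
    apply (open_gt (- b)), Hx.
Qed.

Lemma Derive_fabc_left (f1 f2 : R -> R) (a b c x : R) :
  strongly_hyperbolic f2 -> x < - b ->
  Derive (fabc f1 f2 a b c) x = a * Derive f2 (- x - b).
Proof.
  intros Hf2 Hx.
  rewrite (Derive_ext_loc _ (fun y => - a * f2 (- y - b) + c)).
  - apply is_derive_unique. auto_derive.
    + apply sh_ex_derive; [exact Hf2|lra].
    + unfold Rminus. change (fun y => f2 y) with f2. ring.
  - apply filter_imp with (fun y => y < - b); [apply fabc_left|].
    apply (open_lt (- b)), Hx.
Qed.

Definition graphs_meet_only_at (f1 f2 : R -> R) (a1 b1 c1 a2 b2 c2 xp : R) : Prop :=
  forall x, x <> - b1 -> x <> - b2 -> x <> xp ->
    fabc f1 f2 a1 b1 c1 x <> fabc f1 f2 a2 b2 c2 x.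

Lemma graphs_meet_only_at_sym (f1 f2 : R -> R) (a1 b1 c1 a2 b2 c2 xp : R) :
  graphs_meet_only_at f1 f2 a1 b1 c1 a2 b2 c2 xp ->
  graphs_meet_only_at f1 f2 a2 b2 c2 a1 b1 c1 xp.
Proof. intros H x Hx2 Hx1 Hxp Heq. exact (H x Hx1 Hx2 Hxp (eq_sym Heq)). Qed.

Lemma graphs_meet_only_at_mirror (f1 f2 : R -> R) (a1 b1 c1 a2 b2 c2 xp : R) :
  graphs_meet_only_at f2 f1 a1 (- b1) (- c1) a2 (- b2) (- c2) (- xp) ->
  graphs_meet_only_at f1 f2 a1 b1 c1 a2 b2 c2 xp.
Proof.
  intros H x Hx1 Hx2 Hxp Heq.
  rewrite (fabc_mirror f1 f2 a1 b1 c1 x Hx1), (fabc_mirror f1 f2 a2 b2 c2 x Hx2) in Heq.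
  apply (H (- x)); lra.
Qed.

Section Tangency.

Variables (f1 f2 : R -> R) (a1 b1 c1 a2 b2 c2 xp : R).
Hypotheses (f1_sh : strongly_hyperbolic f1) (f2_sh : strongly_hyperbolic f2)
  (a1_pos : 0 < a1) (a2_pos : 0 < a2) (b_lt : b2 < b1).

Lemma fabc_tangent_right : - b2 < xp ->
  a1 * f1 (xp + b1) + c1 = a2 * f1 (xp + b2) + c2 ->
  a1 * Derive f1 (xp + b1) = a2 * Derive f1 (xp + b2) ->
  c1 < c2 /\ graphs_meet_only_at f1 f2 a1 b1 c1 a2 b2 c2 xp.
Proof.
  intros Hxp Hval Hder.
  set (d := b1 - b2). set (v := xp + b2).
  assert (Hshift : forall x, x + b1 = x + b2 + d) by (intros; unfold d; ring).
  rewrite Hshift in Hval, Hder; fold v in Hval, Hder.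
  assert (Hd : 0 < d) by (unfold d; lra).
  assert (Hv : 0 < v) by (unfold v; lra).
  assert (Hgap : shift_diff f1 a1 a2 d v = c2 - c1) by (unfold shift_diff; lra).
  pose proof (shift_diff_max_pos f1 a1 a2 d v f1_sh a1_pos a2_pos Hd Hv Hder) as Hpos.
  split; [lra|].
  intros x Hx1 Hx2 Hx Heq.
  destruct (Rlt_or_le (- b2) x) as [R2|L2]; [|destruct (Rlt_or_le (- b1) x) as [R1|L1]].
  - rewrite !fabc_right, Hshift in Heq by lra.
    pose proof (shift_diff_strict_max f1 a1 a2 d v f1_sh a1_pos Hd Hv Hder (x + b2)
      ltac:(lra) ltac:(unfold v; lra)) as Hmax.
    unfold shift_diff in Hmax. lra.
  - rewrite fabc_right, fabc_left, Hshift in Heq by lra.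
    pose proof (sh_decreasing f1 f1_sh (x + b2 + d) (v + d) ltac:(unfold d; lra) ltac:(unfold v; lra)).
    pose proof (sh_pos f1 f1_sh v Hv). pose proof (sh_pos f2 f2_sh (- x - b2) ltac:(lra)).
    unfold shift_diff in Hgap. nra.
  - rewrite !fabc_left in Heq by lra.
    pose proof (sh_decreasing f2 f2_sh (- x - b1) (- x - b2) ltac:(lra) ltac:(lra)).
    pose proof (sh_pos f2 f2_sh (- x - b2) ltac:(lra)).
    pose proof (shift_coef_lt f1 a1 a2 d v f1_sh a2_pos Hd Hv Hder). nra.
Qed.

Lemma fabc_tangent_between : - b1 < xp -> xp < - b2 ->
  a1 * f1 (xp + b1) + c1 = - a2 * f2 (- xp - b2) + c2 ->
  a1 * Derive f1 (xp + b1) = a2 * Derive f2 (- xp - b2) ->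
  c1 < c2 /\ graphs_meet_only_at f1 f2 a1 b1 c1 a2 b2 c2 xp.
Proof.
  intros Hxp1 Hxp2 Hval Hder.
  pose proof (sh_pos f1 f1_sh (xp + b1) ltac:(lra)).
  pose proof (sh_pos f2 f2_sh (- xp - b2) ltac:(lra)).
  split; [nra|].
  intros x Hx1 Hx2 Hx Heq.
  destruct (Rlt_or_le (- b2) x) as [R2|L2]; [|destruct (Rlt_or_le (- b1) x) as [R1|L1]].
  - rewrite !fabc_right in Heq by lra.
    pose proof (sh_decreasing f1 f1_sh (xp + b1) (x + b1) ltac:(lra) ltac:(lra)).
    pose proof (sh_pos f1 f1_sh (x + b2) ltac:(lra)). nra.
  - rewrite fabc_right, fabc_left in Heq by lra.
    pose proof (sh_tangent_lt f1 f1_sh (xp + b1) (x + b1) ltac:(lra) ltac:(lra) ltac:(lra)).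
    pose proof (sh_tangent_lt f2 f2_sh (- xp - b2) (- x - b2) ltac:(lra) ltac:(lra) ltac:(lra)).
    nra.
  - rewrite !fabc_left in Heq by lra.
    pose proof (sh_decreasing f2 f2_sh (- xp - b2) (- x - b2) ltac:(lra) ltac:(lra)).
    pose proof (sh_pos f2 f2_sh (- x - b1) ltac:(lra)). nra.
Qed.

End Tangency.

Lemma fabc_tangent_left (f1 f2 : R -> R) (a1 b1 c1 a2 b2 c2 xp : R) :
  strongly_hyperbolic f1 -> strongly_hyperbolic f2 -> 0 < a1 -> 0 < a2 ->
  b2 < b1 -> xp < - b1 ->
  - a1 * f2 (- xp - b1) + c1 = - a2 * f2 (- xp - b2) + c2 ->
  a1 * Derive f2 (- xp - b1) = a2 * Derive f2 (- xp - b2) ->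
  c1 < c2 /\ graphs_meet_only_at f1 f2 a1 b1 c1 a2 b2 c2 xp.
Proof.
  intros Hf1 Hf2 Ha1 Ha2 Hb Hxp Hval Hder.
  destruct (fabc_tangent_right f2 f1 a2 (- b2) (- c2) a1 (- b1) (- c1) (- xp) Hf2 Hf1 Ha2 Ha1)
    as [Hc Hmeet]; unfold Rminus in *; [lra..|].
  split; [lra|].
  apply graphs_meet_only_at_mirror, graphs_meet_only_at_sym, Hmeet.
Qed.

Lemma fabc_tangent_ordered (f1 f2 : R -> R) (a1 b1 c1 a2 b2 c2 xp : R) :
  strongly_hyperbolic f1 -> strongly_hyperbolic f2 -> 0 < a1 -> 0 < a2 -> b2 < b1 ->
  xp <> - b1 -> xp <> - b2 ->
  fabc f1 f2 a1 b1 c1 xp = fabc f1 f2 a2 b2 c2 xp ->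
  Derive (fabc f1 f2 a1 b1 c1) xp = Derive (fabc f1 f2 a2 b2 c2) xp ->
  c1 < c2 /\ graphs_meet_only_at f1 f2 a1 b1 c1 a2 b2 c2 xp.
Proof.
  intros Hf1 Hf2 Ha1 Ha2 Hb Hxp1 Hxp2 Hval Hder.
  destruct (Rlt_or_le (- b2) xp) as [R2|L2]; [|destruct (Rlt_or_le (- b1) xp) as [R1|L1]].
  - rewrite !fabc_right in Hval by lra. rewrite !Derive_fabc_right in Hder by (assumption || lra).
    apply fabc_tangent_right; assumption.
  - rewrite fabc_right, fabc_left in Hval by lra.
    rewrite Derive_fabc_right, Derive_fabc_left in Hder by (assumption || lra).
    apply fabc_tangent_between; (assumption || lra).
  - rewrite !fabc_left in Hval by lra. rewrite !Derive_fabc_left in Hder by (assumption || lra).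
    apply fabc_tangent_left; (assumption || lra).
Qed.

Lemma fabc_tangent (f1 f2 : R -> R) (a1 b1 c1 a2 b2 c2 xp : R) :
  strongly_hyperbolic f1 -> strongly_hyperbolic f2 -> 0 < a1 -> 0 < a2 ->
  (a1, b1, c1) <> (a2, b2, c2) -> xp <> - b1 -> xp <> - b2 ->
  fabc f1 f2 a1 b1 c1 xp = fabc f1 f2 a2 b2 c2 xp ->
  Derive (fabc f1 f2 a1 b1 c1) xp = Derive (fabc f1 f2 a2 b2 c2) xp ->
  b1 <> b2 /\ c1 <> c2 /\ graphs_meet_only_at f1 f2 a1 b1 c1 a2 b2 c2 xp.
Proof.
  intros Hf1 Hf2 Ha1 Ha2 Hne Hxp1 Hxp2 Hval Hder.
  destruct (Rtotal_order b1 b2) as [Hb|[Hb|Hb]].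
  - destruct (fabc_tangent_ordered f1 f2 a2 b2 c2 a1 b1 c1 xp) as [Hc Hmeet]; auto.
    split; [lra|split; [lra|]]. apply graphs_meet_only_at_sym, Hmeet.
  - (* a common pole: equal slopes force a1 = a2, then equal values force c1 = c2 *)
    exfalso. subst b2. apply Hne.
    destruct (Rlt_or_le (- b1) xp) as [R|L].
    + rewrite !fabc_right in Hval by lra. rewrite !Derive_fabc_right in Hder by (assumption || lra).
      pose proof (sh_Derive_neg f1 Hf1 (xp + b1) ltac:(lra)).
      assert (a1 = a2) by nra. subst a2. f_equal. lra.
    + rewrite !fabc_left in Hval by lra. rewrite !Derive_fabc_left in Hder by (assumption || lra).
      pose proof (sh_Derive_neg f2 Hf2 (- xp - b1) ltac:(lra)).
      assert (a1 = a2) by nra. subst a2. f_equal. lra.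
  - destruct (fabc_tangent_ordered f1 f2 a1 b1 c1 a2 b2 c2 xp) as [Hc Hmeet]; auto.
    split; [lra|split; [lra|exact Hmeet]].
Qed.

Lemma fabc_shift_ne (f1 f2 : R -> R) (a b1 b2 c x : R) :
  strongly_hyperbolic f1 -> strongly_hyperbolic f2 -> 0 < a -> b1 <> b2 ->
  x <> - b1 -> x <> - b2 -> fabc f1 f2 a b1 c x <> fabc f1 f2 a b2 c x.
Proof.
  intros Hf1 Hf2 Ha.
  assert (Hlt : forall b1 b2, b1 < b2 -> x <> - b1 -> x <> - b2 ->
            fabc f1 f2 a b1 c x <> fabc f1 f2 a b2 c x).
  { clear b1 b2. intros b1 b2 Hb Hx1 Hx2 Heq.
    destruct (Rlt_or_le (- b1) x) as [R1|L1]; [|destruct (Rlt_or_le (- b2) x) as [R2|L2]].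
    - rewrite !fabc_right in Heq by lra.
      pose proof (sh_decreasing f1 Hf1 (x + b1) (x + b2) ltac:(lra) ltac:(lra)). nra.
    - rewrite fabc_left, fabc_right in Heq by lra.
      pose proof (sh_pos f1 Hf1 (x + b2) ltac:(lra)).
      pose proof (sh_pos f2 Hf2 (- x - b1) ltac:(lra)). nra.
    - rewrite !fabc_left in Heq by lra.
      pose proof (sh_decreasing f2 Hf2 (- x - b2) (- x - b1) ltac:(lra) ltac:(lra)). nra. }
  intros Hb Hx1 Hx2 Heq.
  destruct (Rtotal_order b1 b2) as [Hlt12|[Heq12|Hlt21]]; [|contradiction|].
  - exact (Hlt b1 b2 Hlt12 Hx1 Hx2 Heq).
  - exact (Hlt b2 b1 Hlt21 Hx2 Hx1 (eq_sym Heq)).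
Qed.

Lemma fabc_const_inj (f1 f2 : R -> R) (a b c1 c2 x : R) :
  fabc f1 f2 a b c1 x = fabc f1 f2 a b c2 x -> c1 = c2.
Proof. unfold fabc. destruct (Rlt_dec (- b) x); lra. Qed.

Lemma Dbar_inter (f1 f2 : R -> R) (a1 b1 c1 a2 b2 c2 : R) (q : Pt) :
  Dbar f1 f2 a1 b1 c1 q /\ Dbar f1 f2 a2 b2 c2 q <->
  (exists x, x <> - b1 /\ x <> - b2 /\
     fabc f1 f2 a1 b1 c1 x = fabc f1 f2 a2 b2 c2 x /\
     q = (Some x, Some (fabc f1 f2 a1 b1 c1 x)))
  \/ (b1 = b2 /\ q = (Some (- b1), None))
  \/ (c1 = c2 /\ q = (None, Some c1)).
Proof.
  split.
  - intros [[(x & Hx & ->) | [-> | ->]] [(x' & Hx' & E) | [E | E]]];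
      inversion E; subst; try discriminate.
    + left. exists x'. auto.
    + right; left. split; [lra|reflexivity].
    + right; right. auto.
  - intros [(x & Hx1 & Hx2 & Heq & ->) | [[-> ->] | [-> ->]]].
    + split; left; exists x; split; congruence.
    + split; right; left; reflexivity.
    + split; right; right; reflexivity.
Qed.

Lemma Dbar_inter_pole (f1 f2 : R -> R) (a b c1 c2 : R) (q : Pt) : c1 <> c2 ->
  Dbar f1 f2 a (- b) c1 q /\ Dbar f1 f2 a (- b) c2 q <-> q = (Some b, None).
Proof.
  intros Hc. rewrite Dbar_inter. split.
  - intros [(x & _ & _ & Heq & _) | [[_ ->] | [Hc' _]]].
    + exfalso. exact (Hc (fabc_const_inj f1 f2 a (- b) c1 c2 x Heq)).
    + now rewrite Ropp_involutive.
    + contradiction.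
  - intros ->. right; left. split; [reflexivity|now rewrite Ropp_involutive].
Qed.

Lemma Dbar_inter_infinity (f1 f2 : R -> R) (a b1 b2 c : R) (q : Pt) :
  strongly_hyperbolic f1 -> strongly_hyperbolic f2 -> 0 < a -> b1 <> b2 ->
  Dbar f1 f2 a b1 c q /\ Dbar f1 f2 a b2 c q <-> q = (None, Some c).
Proof.
  intros Hf1 Hf2 Ha Hb. rewrite Dbar_inter. split.
  - intros [(x & Hx1 & Hx2 & Heq & _) | [[Hb' _] | [_ ->]]].
    + exfalso. exact (fabc_shift_ne f1 f2 a b1 b2 c x Hf1 Hf2 Ha Hb Hx1 Hx2 Heq).
    + contradiction.
    + reflexivity.
  - intros ->. right; right. split; reflexivity.
Qed.

Lemma Dbar_inter_tangent (f1 f2 : R -> R) (a1 b1 c1 a2 b2 c2 xp : R) (q : Pt) :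
  strongly_hyperbolic f1 -> strongly_hyperbolic f2 -> 0 < a1 -> 0 < a2 ->
  (a1, b1, c1) <> (a2, b2, c2) -> xp <> - b1 -> xp <> - b2 ->
  fabc f1 f2 a1 b1 c1 xp = fabc f1 f2 a2 b2 c2 xp ->
  Derive (fabc f1 f2 a1 b1 c1) xp = Derive (fabc f1 f2 a2 b2 c2) xp ->
  Dbar f1 f2 a1 b1 c1 q /\ Dbar f1 f2 a2 b2 c2 q <->
  q = (Some xp, Some (fabc f1 f2 a1 b1 c1 xp)).
Proof.
  intros Hf1 Hf2 Ha1 Ha2 Hne Hxp1 Hxp2 Hval Hder.
  destruct (fabc_tangent f1 f2 a1 b1 c1 a2 b2 c2 xp) as (Hb & Hc & Hmeet); auto.
  rewrite Dbar_inter. split.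
  - intros [(x & Hx1 & Hx2 & Heq & ->) | [[Hb' _] | [Hc' _]]]; [|contradiction..].
    destruct (Req_dec x xp) as [->|Hx]; [reflexivity|].
    exfalso. exact (Hmeet x Hx1 Hx2 Hx Heq).
  - intros ->. left. exists xp. auto.
Qed.

Theorem lemma4p9 (f1 f2 : R -> R) (a1 a2 b1 b2 c1 c2 : R) (p : Pt) :
  strongly_hyperbolic f1 -> strongly_hyperbolic f2 ->
  0 < a1 -> 0 < a2 ->
  (a1, b1, c1) <> (a2, b2, c2) ->
  ( (exists b : R, p = (Some b, None) /\ a1 = a2 /\ b1 = - b /\ b2 = - b /\ c1 <> c2)
    \/ (exists c : R, p = (None, Some c) /\ a1 = a2 /\ b1 <> b2 /\ c1 = c /\ c2 = c)
    \/ (exists xp yp : R, p = (Some xp, Some yp) /\ xp <> - b1 /\ xp <> - b2 /\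
          fabc f1 f2 a1 b1 c1 xp = yp /\ fabc f1 f2 a2 b2 c2 xp = yp /\
          Derive (fabc f1 f2 a1 b1 c1) xp = Derive (fabc f1 f2 a2 b2 c2) xp) ) ->
  forall q : Pt, (Dbar f1 f2 a1 b1 c1 q /\ Dbar f1 f2 a2 b2 c2 q) <-> q = p.
Proof.
  intros Hf1 Hf2 Ha1 Ha2 Hne Hcase q.
  destruct Hcase as [(b & -> & <- & -> & -> & Hc)
                    | [(c & -> & <- & Hb & -> & ->)
                      | (xp & yp & -> & Hxp1 & Hxp2 & <- & Hval & Hder)]].
  - apply Dbar_inter_pole, Hc.
  - apply Dbar_inter_infinity; assumption.
  - apply Dbar_inter_tangent; auto.
Qed.
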